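(* Let $R$ be a profile of strict linear orders over bundles. An assignment $P$ admits no generalized cycle (w.r.t. $R$) if and only if $P$ is the output, on $R$, of some eating algorithm, i.e., there exist eating speed functions $\omega=(\omega_j)_{j\le n}$ such that the eating algorithm with speeds $\omega$ outputs $P$.
   Context: Setting: $N=\{1,\dots,n\}$ agents; $M=D_1\cup\dots\cup D_p$ items with pairwise disjoint types, $|D_i|=n$, unit supply; bundles $\mathcal D=D_1\times\dots\times D_p$; strict linear orders $\succ_j$ on $\mathcal D$. An assignment is an $n\times|\mathcal D|$ matrix $(p_{j,x})$ with entries in $[0,1]$, rows summing to $1$, and $\sum_j\sum_{x\ni o}p_{j,x}=1$ for every item $o$. $(x,\hat x)$ is an improvable tuple for $P$ if some agent $j$ has $x\succ_j\hat x$ and $p_{j,\hat x}>0$. A nonempty set $C$ of improvable tuples is a generalized cycle if for every item $o$: if some $(x_1,\hat x_1)\in C$ has $o\in x_1$, then some $(x_2,\hat x_2)\in C$ has $o\in\hat x_2$. Eating algorithms: an eating speed function for agent $j$ is a nonnegative integrable function $\omega_j:[0,1]\to\mathbb R_{\ge0}$ with $\int_0^1\omega_j(t)\,dt=1$. Given $\omega=(\omega_j)_j$, items start with supply $1$; a bundle is available if all its items have positive remaining supply. For $t\in[0,1]$, each agent $j$ eats her $\succ_j$-most-preferred available bundle at instantaneous rate $\omega_j(t)$: $p_{j,x}$ for that bundle $x$ grows at rate $\omega_j(t)$ and each item of $x$ is consumed at that rate. When an item's supply reaches $0$ it is exhausted, all bundles containing it become unavailable, and agents switch to their next most preferred available bundle.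 The process stops at time $1$ or when all items are exhausted; the accumulated matrix $(p_{j,x})$ is the output. *)

From HB Require Import structures.
From mathcomp Require Import all_boot all_order all_algebra.
From mathcomp Require Import all_classical all_reals all_analysis.
Set Implicit Arguments. Unset Strict Implicit. Unset Printing Implicit Defensive.
Import Order.TTheory GRing.Theory Num.Theory.
Local Open Scope ring_scope.
Local Open Scope classical_set_scope.

(* Agents: 'I_n.  Item types: 'I_p.  The item set D_i is identified with
   'I_n, so an item is a pair (i, k) : 'I_p * 'I_n ("k-th item of type i").
   A bundle picks one item of each type: a finite function 'I_p -> 'I_n. *)
Definition item (n p : nat) := ('I_p * 'I_n)%type.
Definition bundle (n p : nat) := {ffun 'I_p -> 'I_n}.

Definition in_bundle n p (o : item n p) (x : bundle n p) : bool := x o.1 == o.2.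

(* pref x y  means  x >_j y  (strict preference). *)
Definition strict_linear_order (T : finType) (r : rel T) : Prop :=
  [/\ irreflexive r, transitive r & forall x y, x != y -> r x y || r y x].

Definition is_assignment (R : realType) n p (P : 'I_n -> bundle n p -> R) : Prop :=
  [/\ (forall j x, 0 <= P j x <= 1),
      (forall j, \sum_(x : bundle n p) P j x = 1) &
      (forall o : item n p, \sum_(j < n) \sum_(x : bundle n p | in_bundle o x) P j x = 1)].

Definition improvable (R : realType) n p (pref : 'I_n -> rel (bundle n p))
  (P : 'I_n -> bundle n p -> R) (t : bundle n p * bundle n p) : Prop :=
  exists j, pref j t.1 t.2 /\ 0 < P j t.2.

Definition generalized_cycle (R : realType) n p (pref : 'I_n -> rel (bundle n p))
  (P : 'I_n -> bundle n p -> R) (C : {set bundle n p * bundle n p}) : Prop :=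
  [/\ C != finset.set0,
      (forall t, t \in C -> improvable pref P t) &
      (forall o : item n p,
         (exists2 t, t \in C & in_bundle o t.1) ->
         (exists2 t, t \in C & in_bundle o t.2))].

Definition no_generalized_cycle (R : realType) n p (pref : 'I_n -> rel (bundle n p))
  (P : 'I_n -> bundle n p -> R) : Prop :=
  forall C : {set bundle n p * bundle n p}, ~ generalized_cycle pref P C.

Definition eating_speed (R : realType) (w : R -> R) : Prop :=
  [/\ (forall t, 0 <= t <= 1 -> 0 <= w t),
      (@lebesgue_measure R).-integrable `[0%R, 1%R] (EFin \o w) &
      Rintegral (@lebesgue_measure R) `[0%R, 1%R] w = 1].

(* A trajectory q j x t = amount of bundle x eaten by agent j up to time t. *)
Definition supply (R : realType) n p (q : 'I_n -> bundle n p -> R -> R)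
  (o : item n p) (t : R) : R :=
  1 - \sum_(j < n) \sum_(x : bundle n p | in_bundle o x) q j x t.

Definition available (R : realType) n p (q : 'I_n -> bundle n p -> R -> R)
  (x : bundle n p) (t : R) : bool :=
  [forall o : item n p, in_bundle o x ==> (0 < supply q o t)].

Definition eats (R : realType) n p (pref : 'I_n -> rel (bundle n p))
  (q : 'I_n -> bundle n p -> R -> R) (j : 'I_n) (x : bundle n p) (t : R) : bool :=
  available q x t &&
  [forall y : bundle n p, available q y t ==> (y == x) || pref j x y].

Definition eating_run (R : realType) n p (pref : 'I_n -> rel (bundle n p))
  (w : 'I_n -> R -> R) (q : 'I_n -> bundle n p -> R -> R) : Prop :=
  forall j x t, 0 <= t <= 1 ->
    let f := fun s => w j s * (eats pref q j x s)%:R in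
    (@lebesgue_measure R).-integrable `[0%R, t] (EFin \o f) /\
    q j x t = Rintegral (@lebesgue_measure R) `[0%R, t] f.

Definition eating_output (R : realType) n p (pref : 'I_n -> rel (bundle n p))
  (w : 'I_n -> R -> R) (P : 'I_n -> bundle n p -> R) : Prop :=
  exists q, eating_run pref w q /\ forall j x, P j x = q j x 1.

From HB Require Import structures.
From mathcomp Require Import all_boot all_order all_algebra.
From mathcomp Require Import all_classical all_reals all_analysis.
From mathcomp Require Import lra zify.
Set Implicit Arguments. Unset Strict Implicit. Unset Printing Implicit Defensive.
Import Order.TTheory GRing.Theory Num.Theory.

(* (<=) Supplies only decrease along a run.  If j prefers x to x^ but holds some
   x^, she ate x^ at a time when x was unavailable.  In a generalized cycle,
   the tuple (x, x^) with the earliest such time has an exhausted item of x,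
   which by closure lies in some x'^ still available later: contradiction
   (eating_output_acyclic).

   (=>) Without generalized cycles every nonempty family of improvable tuples
   has a source item; peeling sources off ranks the items (ranking_of_sources,
   acyclic_item_ranking) so that the rank of a bundle, the least rank of its
   items, increases along improvable tuples.  Then bundle x is exhausted at a
   time finish x given by its rank, and agent j eats x at constant speed during
   [start j x, finish x), after every bundle she prefers is exhausted; this
   schedule is a run of the eating algorithm with output P (schedule_output). *)

Definition source_item (T It : finType) (inb : It -> T -> bool)
    (C : {set T * T}) (z : It) : Prop :=
  (exists2 t, t \in C & inb z t.1) /\ forall t, t \in C -> ~~ inb z t.2.

(* If every nonempty subfamily of C has a source, the items can be ranked so
   that each pair of C has an item on its left side ranked strictly below all
   items on its right side (topological sorting by repeated source removal). *)
Lemma ranking_of_sources (T It : finType) (inb : It -> T -> bool)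
    (C : {set T * T}) :
  (forall C' : {set T * T}, C' \subset C -> C' != finset.set0 ->
     exists z, source_item inb C' z) ->
  exists e : It -> nat, forall t, t \in C ->
    exists z1, inb z1 t.1 /\ forall z2, inb z2 t.2 -> e z1 < e z2.
Proof.
move: {2}#|C| (leqnn #|C|) => k; elim: k C => [|k IH] C Ck sources.
  exists (fun _ => 0) => t tC.
  by move: Ck; rewrite leqn0 cards_eq0 => /eqP C0; rewrite C0 inE in tC.
have [->|Cn0] := eqVneq C finset.set0; first by exists (fun _ => 0) => t; rewrite inE.
have [z [[t0 t0C zt0] z_src]] := sources C (subxx C) Cn0.
set C' := [set t in C | ~~ inb z t.1].
have sC' : C' \subset C by apply/fintype.subsetP => t; rewrite inE => /andP[].
have C'k : #|C'| <= k.
  have : C' \proper C.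
    rewrite finset.properEneq sC' andbT; apply/eqP => E.
    by move: t0C; rewrite -E inE zt0 andbF.
  by move/fintype.proper_card => lt; rewrite -ltnS (leq_trans lt).
have [e' He'] := IH C' C'k (fun C2 s2 => sources C2 (fintype.subset_trans s2 sC')).
exists (fun z' => if z' == z then 0 else (e' z').+1) => t tC.
have [zt|nzt] := boolP (inb z t.1).
  exists z; split => // z2 z2t; rewrite eqxx.
  by case: eqP => // E; move: (z_src t tC); rewrite -E z2t.
have tC' : t \in C' by rewrite inE tC nzt.
have [z1 [z1t lt1]] := He' t tC'.
exists z1; split => // z2 z2t.
have -> : (z1 == z) = false by apply/negbTE; apply: contraNneq nzt => <-.
have -> : (z2 == z) = false by apply/negbTE; apply: contraNneq (z_src t tC) => <-.
by rewrite ltnS lt1.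
Qed.

Local Open Scope ring_scope.
Local Open Scope classical_set_scope.

Section EatingRelation.
Variables (R : realType) (n p : nat) (pref : 'I_n -> rel (bundle n p)).
Hypothesis Hpref : forall j, strict_linear_order (pref j).
Variable q : 'I_n -> bundle n p -> R -> R.

Lemma eats_unavailable_better j x y s :
  eats pref q j x s -> pref j y x -> ~~ available q y s.
Proof.
move=> /andP[_ best] yx; apply/negP => avy.
have [irr tr _] := Hpref j.
have := forallP best y; rewrite avy /= => /orP[/eqP E|xy].
  by move: yx; rewrite E irr.
by move: (tr _ _ _ yx xy); rewrite irr.
Qed.

Lemma eats_uniq j x y s : eats pref q j x s -> eats pref q j y s -> x = y.
Proof.
move=> ex ey; apply/eqP; apply: contraT => xy.
have [_ _ tot] := Hpref j.
case/orP: (tot x y xy) => [xy'|yx'].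
  by move: (eats_unavailable_better ey xy'); case/andP: ex => ->.
by move: (eats_unavailable_better ex yx'); case/andP: ey => ->.
Qed.

End EatingRelation.

Section EatingRunAcyclic.
Variables (R : realType) (n p : nat) (pref : 'I_n -> rel (bundle n p)).
Hypothesis Hpref : forall j, strict_linear_order (pref j).
Variables (w : 'I_n -> R -> R) (q : 'I_n -> bundle n p -> R -> R).
Hypothesis Hw : forall j, eating_speed (w j).
Hypothesis Hq : eating_run pref w q.

(* Eaten amounts are nondecreasing in time: integrals of nonnegative speeds. *)
Lemma eaten_mono j x a b : 0 <= a -> a <= b -> b <= 1 -> q j x a <= q j x b.
Proof.
move=> a0 ab b1.
have a01 : 0 <= a <= 1 by rewrite a0 (le_trans ab b1).
have b01 : 0 <= b <= 1 by rewrite (le_trans a0 ab) b1.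
have [ia ->] := Hq j x a01; have [ib ->] := Hq j x b01.
rewrite /Rintegral; apply: fine_le; [exact: integrable_fin_num..|].
apply: ge0_subset_integral => //; first exact: (measurable_int _ ib).
- move=> s /=; rewrite in_itv /= => /andP[s0 sb].
  rewrite lee_fin mulr_ge0 ?ler0n //.
  by have [w_ge0 _ _] := Hw j; apply: w_ge0; rewrite s0 (le_trans sb b1).
- by move=> s /=; rewrite !in_itv /= => /andP[-> sa] /=; exact: le_trans sa ab.
Qed.

Lemma supply_antitone it a b :
  0 <= a -> a <= b -> b <= 1 -> supply q it b <= supply q it a.
Proof.
move=> a0 ab b1; rewrite /supply lerB //.
by apply: ler_sum => j _; apply: ler_sum => x _; exact: eaten_mono.
Qed.

Lemma eaten_never j x :
  (forall s, 0 <= s <= 1 -> ~~ eats pref q j x s) -> q j x 1 = 0.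
Proof.
move=> never; have r01 : (0 : R) <= (1 : R) <= 1 by rewrite ler01 lexx.
have [_ ->] := Hq j x r01.
rewrite (@eq_Rintegral _ _ _ _ _ (fun _ => 0)) ?Rintegral_cst ?mul0r //.
by move=> s /set_mem /=; rewrite in_itv /= => /never/negbTE ->; rewrite mulr0.
Qed.

(* If (x, x^) is improvable for the output, then at some time x^ is still
   available while x is not: the agent holding x^ ate it after losing x. *)
Lemma improvable_switch_time (P : 'I_n -> bundle n p -> R) t :
  (forall j x, P j x = q j x 1) -> improvable pref P t ->
  exists s, [/\ 0 <= s <= 1, available q t.2 s & ~~ available q t.1 s].
Proof.
move=> HP [j [better Pj]].
have [[s [s01 ejs]]|never] :=
  pselect (exists s, 0 <= s <= 1 /\ eats pref q j t.2 s).
  exists s; split => //; first by case/andP: ejs.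
  exact: eats_unavailable_better ejs better.
suff : P j t.2 = 0 by move=> E; move: Pj; rewrite E ltxx.
rewrite HP eaten_never // => s s01; apply/negP => ejs; apply: never.
by exists s.
Qed.

Lemma eating_output_acyclic (P : 'I_n -> bundle n p -> R) :
  (forall j x, P j x = q j x 1) -> no_generalized_cycle pref P.
Proof.
move=> HP C [Cn0 Cimp Cclos].
have /choice [time Htime] : forall t, exists s, t \in C ->
    [/\ 0 <= s <= 1, available q t.2 s & ~~ available q t.1 s].
  move=> t; have [tC|] := boolP (t \in C); last by exists 0.
  by have [s Hs] := improvable_switch_time HP (Cimp t tC); exists s.
have /set0Pn [t0 t0C] := Cn0.
have [tm tmC tm_min] := arg_minP time t0C.
have [/andP[s0 _] _ unavail] := Htime tm tmC.
case/forallPn: unavail => it; rewrite negb_imply => /andP[it1 exhausted].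
have [t' t'C it2] := Cclos it (ex_intro2 _ _ tm tmC it1).
have [/andP[_ s1'] avail' _] := Htime t' t'C.
have := forallP avail' it; rewrite it2 /= => pos.
have later := supply_antitone it s0 (tm_min t' t'C) s1'.
by move: exhausted; rewrite (lt_le_trans pos later).
Qed.

End EatingRunAcyclic.

Section AcyclicRanking.
Variables (R : realType) (n p : nat) (pref : 'I_n -> rel (bundle n p)).
Variable P : 'I_n -> bundle n p -> R.

Lemma acyclic_item_ranking : no_generalized_cycle pref P ->
  exists e : item n p -> nat, forall y x, improvable pref P (y, x) ->
    exists it1, in_bundle it1 y /\ forall it2, in_bundle it2 x -> (e it1 < e it2)%N.
Proof.
move=> acyclic.
pose C : {set bundle n p * bundle n p} :=
  finset.finset (fun t => `[< improvable pref P t >]).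
have [e He] : exists e : item n p -> nat, forall t, t \in C ->
    exists it1, in_bundle it1 t.1 /\ forall it2, in_bundle it2 t.2 -> (e it1 < e it2)%N.
  apply: ranking_of_sources => C' sC' C'n0.
  (* a sourceless nonempty family of improvable tuples is a generalized cycle *)
  apply: contrapT => no_src; apply: (acyclic C'); split => //.
    by move=> t /(fintype.subsetP sC'); rewrite inE => /asboolP.
  move=> it [t tC' it_t]; apply: contrapT => no2; apply: no_src; exists it.
  split; first by exists t.
  by move=> t' t'C'; apply/negP => it'; apply: no2; exists t'.
by exists e => y x imp; apply: (He (y, x)); rewrite inE; exact/asboolP.
Qed.

End AcyclicRanking.

Section LebesgueSlots.
Variable R : realType.
Notation mu := (@lebesgue_measure R).

Lemma slot_measure_full (a b t : R) : 0 <= a -> a <= b -> b <= t ->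
  fine (mu ([set` Interval (BLeft a) (BLeft b)] `&` `[0, t])) = b - a.
Proof.
move=> a0 ab bt.
have -> : [set` Interval (BLeft a) (BLeft b)] `&` `[0, t] =
          [set` Interval (BLeft a) (BLeft b)].
  apply/seteqP; split => s /=; rewrite !in_itv /=; first by case.
  move=> /andP[le_as sb]; split; rewrite ?in_itv /= ?le_as ?sb //.
  by rewrite (le_trans a0 le_as) ltW // (lt_le_trans sb bt).
rewrite lebesgue_measure_itv /= lte_fin.
have [ab'|ba] := ltP a b; first by rewrite -EFinD.
have -> : b = a by apply/le_anti; rewrite ba ab.
by rewrite subrr.
Qed.

Lemma slot_measure_partial (a b t : R) : 0 <= a -> t < b ->
  fine (mu ([set` Interval (BLeft a) (BLeft b)] `&` `[0, t])) =
  if a < t then t - a else 0.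
Proof.
move=> a0 tb.
have -> : [set` Interval (BLeft a) (BLeft b)] `&` `[0, t] = `[a, t].
  apply/seteqP; split => s /=; rewrite !in_itv /=.
    by move=> -[/andP[-> _] /andP[_ ->]].
  by move=> /andP[le_as st]; rewrite le_as (le_lt_trans st tb) (le_trans a0 le_as) st.
rewrite lebesgue_measure_itv /= lte_fin.
by case: ltP => // _; rewrite -EFinD.
Qed.

Lemma Rintegral_fsum (I : finType) (F : I -> R -> R) :
  (forall i, mu.-integrable `[0%R, 1%R] (EFin \o F i)) ->
  Rintegral mu `[0%R, 1%R] (fun s => \sum_i F i s) =
  \sum_i Rintegral mu `[0%R, 1%R] (F i).
Proof.
move=> HF; rewrite /Rintegral.
under eq_integral do rewrite -sumEFin.
rewrite (@integral_sum _ _ _ mu _ (measurable_itv _) _ (fun i s => (F i s)%:E) HF).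
rewrite (eq_bigr (fun i => (Rintegral mu `[0%R, 1%R] (F i))%:E)) ?sumEFin //.
by move=> i _; rewrite fineK //; apply: integrable_fin_num (HF i); exact: measurable_itv.
Qed.

End LebesgueSlots.

Section EatingSchedule.
Variables (R : realType) (n p : nat) (pref : 'I_n -> rel (bundle n p)).
Hypothesis Hpref : forall j, strict_linear_order (pref j).
Variable P : 'I_n -> bundle n p -> R.
Hypothesis HP : is_assignment P.
Variable e : item n p -> nat.
Hypothesis He : forall y x, improvable pref P (y, x) ->
  exists it1, in_bundle it1 y /\ forall it2, in_bundle it2 x -> (e it1 < e it2)%N.

Notation mu := (@lebesgue_measure R).

Lemma P_ge0 j x : 0 <= P j x.
Proof. by have [HP01 _ _] := HP; case/andP: (HP01 j x). Qed.

(* The rank of a bundle is the least rank of its items, and top_rank when it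
   has no item at all (p = 0). *)
Definition top_rank : nat := (\max_(it : item n p) e it).+1.
Definition rank (x : bundle n p) : nat :=
  \big[minn/top_rank]_(it | in_bundle it x) e it.

Lemma rank_le_item it x : in_bundle it x -> (rank x <= e it)%N.
Proof. by move=> itx; rewrite /rank -minEnat -leEnat; exact: bigmin_le_cond. Qed.

Lemma rank_le_top x : (rank x <= top_rank)%N.
Proof. by rewrite /rank -minEnat -leEnat; exact: bigmin_le_id. Qed.

Lemma rank_attained x :
  rank x = top_rank \/ exists2 it, in_bundle it x & rank x = e it.
Proof.
rewrite /rank; elim/big_ind: _ => [|u v Hu Hv|it itx];
  [by left | by rewrite /minn; case: ltnP | by right; exists it].
Qed.

Lemma rank_improvable y x : improvable pref P (y, x) -> (rank y < rank x)%N.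
Proof.
move=> /He [it1 [it1y lt12]]; apply: leq_ltn_trans (rank_le_item it1y) _.
rewrite /rank -minEnat -leEnat; apply/bigmin_geP; split => //.
by rewrite leEnat ltnS; exact: leq_bigmax.
Qed.

(* Time is cut into slots of length 1/slots; bundle x is exhausted at time
   finish x, and agent j eats x during window j x = [start j x, finish x),
   start j x being the latest exhaustion time of the bundles j prefers to x. *)
Definition slots : R := (top_rank.+2)%:R.
Definition finish x : R := (rank x).+1%:R / slots.
Definition start j x : R := (\max_(y | pref j y x) (rank y).+1)%:R / slots.
Definition window j x : set R := [set` Interval (BLeft (start j x)) (BLeft (finish x))].
Definition rate j x : R := P j x / (finish x - start j x).
Definition eaten j x (t : R) : R :=
  rate j x * fine (mu (window j x `&` `[0%R, t])).
Definition speed j (s : R) : R := \sum_(x : bundle n p) rate j x * \1_(window j x) s.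

Lemma slots_gt0 : 0 < slots.
Proof. by rewrite ltr0n. Qed.

Lemma lt_slot (a b : nat) : (a%:R / slots < b%:R / slots) = (a < b)%N.
Proof. by rewrite ltr_pM2r ?invr_gt0 ?slots_gt0 // ltr_nat. Qed.

Lemma le_slot (a b : nat) : (a%:R / slots <= b%:R / slots) = (a <= b)%N.
Proof. by rewrite ler_pM2r ?invr_gt0 ?slots_gt0 // ler_nat. Qed.

Lemma start_ge0 j x : 0 <= start j x.
Proof. by rewrite divr_ge0 // ltW // slots_gt0. Qed.

Lemma finish_le1 x : finish x <= 1.
Proof.
rewrite ler_pdivrMr ?slots_gt0 // mul1r ler_nat.
by have := rank_le_top x; lia.
Qed.

Lemma finish_le_start j y x : pref j y x -> finish y <= start j x.
Proof.
by move=> yx; rewrite le_slot; exact: (leq_bigmax_cond (F := fun y => (rank y).+1)).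
Qed.

Lemma in_window j x s : (s \in window j x) = (start j x <= s) && (s < finish x).
Proof.
rewrite /window; apply/idP/idP => [/set_mem /=|H]; rewrite ?in_itv //.
by apply: mem_set => /=; rewrite in_itv.
Qed.

Lemma start_lt_finish j x : 0 < P j x -> start j x < finish x.
Proof.
move=> Pp; rewrite lt_slot ltnS; apply/bigmax_leqP => y yx.
by apply: rank_improvable; exists j.
Qed.

Lemma window_disjoint j x y s : 0 < P j x -> 0 < P j y -> x != y ->
  s \in window j x -> s \in window j y -> False.
Proof.
move=> Px Py xy; rewrite !in_window => /andP[xs sx] /andP[ys sy].
have [_ _ tot] := Hpref j.
by case/orP: (tot x y xy) => /finish_le_start; lra.
Qed.

Lemma P_cases j x : P j x = 0 \/ 0 < P j x.
Proof. by have := P_ge0 j x; rewrite le_eqVlt => /predU1P[<-|]; [left|right]. Qed.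

Lemma rate_zero j x : P j x = 0 -> rate j x = 0.
Proof. by move=> P0; rewrite /rate P0 mul0r. Qed.

Lemma rate_ge0 j x : 0 <= rate j x.
Proof.
case: (P_cases j x) => [/rate_zero -> //|Pp].
by rewrite divr_ge0 ?P_ge0 // subr_ge0 ltW // start_lt_finish.
Qed.

Lemma rate_window j x : rate j x * (finish x - start j x) = P j x.
Proof.
case: (P_cases j x) => [P0|Pp]; first by rewrite rate_zero // mul0r P0.
by rewrite /rate divfK // lt0r_neq0 // subr_gt0 start_lt_finish.
Qed.

Lemma eaten_done j x t : finish x <= t -> eaten j x t = P j x.
Proof.
case: (P_cases j x) => [P0|Pp] xt; first by rewrite /eaten rate_zero // mul0r P0.
by rewrite /eaten slot_measure_full ?rate_window ?start_ge0 // ltW // start_lt_finish.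
Qed.

Lemma eaten_partial j x t : 0 < P j x -> t < finish x -> eaten j x t < P j x.
Proof.
move=> Pp tx; rewrite /eaten slot_measure_partial ?start_ge0 //.
rewrite -(rate_window j x) ltr_pM2l; last first.
  by rewrite divr_gt0 // subr_gt0 start_lt_finish.
by have := start_lt_finish Pp; case: ifP => _; lra.
Qed.

Lemma eaten_le j x t : eaten j x t <= P j x.
Proof.
have [xt|tx] := leP (finish x) t; first by rewrite eaten_done.
case: (P_cases j x) => [P0|Pp]; first by rewrite /eaten rate_zero // mul0r P0.
exact/ltW/eaten_partial.
Qed.

Lemma supply_left it s : supply eaten it s =
  \sum_(j < n) \sum_(x : bundle n p | in_bundle it x) (P j x - eaten j x s).
Proof.
have [_ _ HPo] := HP; rewrite /supply -[X in X - _](HPo it) -sumrB.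
by apply: eq_bigr => j _; rewrite -sumrB.
Qed.

Lemma available_before_finish j x s : 0 < P j x -> s < finish x ->
  available eaten x s.
Proof.
move=> Pp sx; apply/forallP => it; apply/implyP => itx.
rewrite supply_left (bigD1 j) //= (bigD1 x) //=.
have left_pos : 0 < P j x - eaten j x s by rewrite subr_gt0 eaten_partial.
have left_ge0 i y : 0 <= P i y - eaten i y s by rewrite subr_ge0 eaten_le.
apply: lt_le_trans left_pos _; rewrite -addrA lerDl.
by apply: addr_ge0; do ![apply: sumr_ge0 => * | exact: left_ge0].
Qed.

(* Once a bundle preferred by j to one of her held bundles x is finished, it
   is unavailable: its least ranked item is exhausted. *)
Lemma unavailable_after_start j x y s : 0 < P j x -> start j x <= s ->
  pref j y x -> ~~ available eaten y s.
Proof.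
move=> Pp xs yx; have yx_time := finish_le_start yx.
case: (rank_attained y) => [top|[it ity ro]].
  have := le_lt_trans yx_time (start_lt_finish Pp).
  by rewrite lt_slot top; have := rank_le_top x; lia.
apply/forallPn; exists it; rewrite negb_imply ity /= supply_left.
rewrite big1 ?ltxx // => j' _; rewrite big1 // => x' itx'.
rewrite eaten_done ?subrr //; apply: le_trans (le_trans yx_time xs).
by rewrite le_slot ltnS ro; exact: rank_le_item.
Qed.

Lemma eats_window j x s : 0 < P j x -> s \in window j x -> eats pref eaten j x s.
Proof.
rewrite in_window => Pp /andP[xs sx].
rewrite /eats (available_before_finish Pp sx) /=.
apply/forallP => y; apply/implyP => avy; case: (eqVneq y x) => //= yx.
have [_ _ tot] := Hpref j; have := tot x y; rewrite eq_sym yx => /(_ isT).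
case/orP => // pyx.
by move: avy; rewrite (negbTE (unavailable_after_start Pp xs pyx)).
Qed.

Lemma rate_off_window j x s : ~~ ((0 < P j x) && (s \in window j x)) ->
  rate j x * \1_(window j x) s = 0.
Proof.
rewrite negb_and => /orP[nP|ns]; last by rewrite indicE (negbTE ns) mulr0.
by case: (P_cases j x) => [/rate_zero ->|Pp]; [rewrite mul0r | rewrite Pp in nP].
Qed.

Lemma speed_in_window j y s : 0 < P j y -> s \in window j y ->
  speed j s = rate j y.
Proof.
move=> Py sy; rewrite /speed (bigD1 y) //= big1 ?addr0.
  by rewrite indicE sy mulr1.
move=> z zy; apply: rate_off_window; apply/negP => /andP[Pz sz].
by apply: (window_disjoint Py Pz _ sy sz); rewrite eq_sym.
Qed.

Lemma speed_eats j x s :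
  speed j s * (eats pref eaten j x s)%:R = rate j x * \1_(window j x) s.
Proof.
have [/existsP [y /andP[Py sy]]|none] :=
  boolP [exists y, (0 < P j y) && (s \in window j y)].
  have ey := eats_window Py sy.
  case: (eqVneq x y) => [->|xy]; first by rewrite ey (speed_in_window Py sy) indicE sy.
  rewrite (_ : eats _ _ _ _ _ = false) ?mulr0; last first.
    by apply/negP => ex; move: xy; rewrite (eats_uniq Hpref ex ey) eqxx.
  rewrite rate_off_window //; apply/negP => /andP[Px sx].
  exact: (window_disjoint Px Py xy sx sy).
have off z : rate j z * \1_(window j z) s = 0.
  by apply: rate_off_window; apply: contra none => H; apply/existsP; exists z.
by rewrite /speed big1 ?mul0r ?off.
Qed.

Lemma eaten_integral j x t :
  mu.-integrable `[0%R, t]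
    (EFin \o (fun s => rate j x * \1_(window j x) s)) /\
  Rintegral mu `[0%R, t]
    (fun s => rate j x * \1_(window j x) s) = eaten j x t.
Proof.
have window_meas : measurable (window j x) by exact: measurable_itv.
have int1 : mu.-integrable `[0%R, t] (EFin \o \1_(window j x)).
  by apply: (integrableS _ _ (@subsetT _ _)) => //; exact: integrable_indic_itv.
split; last by rewrite RintegralZl // /Rintegral integral_indic.
by apply: eq_integrable (integrableZl _ (rate j x) int1).
Qed.

Lemma schedule_run : eating_run pref speed eaten.
Proof.
move=> j x t _ /=; have [int <-] := eaten_integral j x t; split.
  by apply: eq_integrable int => // s _ /=; rewrite speed_eats.
by apply: eq_Rintegral => s _; rewrite speed_eats.
Qed.

(* Each speed is nonnegative and integrable with total mass \sum_x P j x = 1. *)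
Lemma schedule_speed j : eating_speed (speed j).
Proof.
have int x := (eaten_integral j x 1).1.
split.
- move=> t _; apply: sumr_ge0 => x _.
  by rewrite mulr_ge0 ?rate_ge0 // indicE ler0n.
- apply: eq_integrable (integrable_sum _ _ (fun x _ => int x)) => //.
  by move=> s _ /=; rewrite sumEFin.
- rewrite /speed Rintegral_fsum //.
  under eq_bigr do rewrite (eaten_integral _ _ 1).2 eaten_done ?finish_le1 //.
  by have [_ HPj _] := HP; exact: HPj.
Qed.

Lemma schedule_output : exists w : 'I_n -> R -> R,
  (forall j, eating_speed (w j)) /\ eating_output pref w P.
Proof.
exists speed; split; first exact: schedule_speed.
exists eaten; split; first exact: schedule_run.
by move=> j x; rewrite eaten_done // finish_le1.
Qed.

End EatingSchedule.

Unset Implicit Arguments.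
Set Strict Implicit.

Theorem theorem5 (R : realType) (n p : nat)
  (pref : 'I_n -> rel (bundle n p))
  (Hpref : forall j, strict_linear_order (pref j))
  (P : 'I_n -> bundle n p -> R)
  (HP : is_assignment P) :
  no_generalized_cycle pref P <->
  exists w : 'I_n -> R -> R,
    (forall j, eating_speed (w j)) /\ eating_output pref w P.
Proof.
split.
- move=> /acyclic_item_ranking [e He].
  exact: (schedule_output Hpref HP He).
- move=> [w [Hw [q [Hq HPq]]]].
  exact: (eating_output_acyclic Hpref Hw Hq HPq).
Qed.
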